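(* Let $\mathbf{C}=\mathbf{FdHilb}$, let $A$ be a finite-dimensional Hilbert space, and let $X=\mathbb{C}^{n}$ with the classical object $\delta:|i\rangle\mapsto|ii\rangle$, $\epsilon:|i\rangle\mapsto 1$. Then the abstract POVMs on $A$ with outcomes in $X$ (in the sense defined below) are exactly the maps of the form $\rho\mapsto\sum_{i=1}^n\mathrm{Tr}(g_i\rho g_i^\dagger)\,|i\rangle\langle i|$ where $g_1,\dots,g_n$ are linear operators on $A$ with $\sum_i g_i^\dagger g_i=1_A$, i.e. exactly the maps $\rho\mapsto\sum_i\mathrm{Tr}(F_i\rho)|i\rangle\langle i|$ for POVMs $\{F_i\}_{i=1}^n$ (positive operators $F_i$ with $\sum_i F_i=1_A$) in the usual sense.
   Context: Classical object: in a $\dagger$-compact category, an object $X$ with $\delta: X\to X\otimes X$, $\epsilon: X\to I$ forming a special ($\delta^\dagger\circ\delta=1_X$) commutative comonoid satisfying $\delta\circ\delta^\dagger=(1_X\otimes\delta^\dagger)\circ(\delta\otimes 1_X)$ and with $\eta_X=\delta\circ\epsilon^\dagger$ (so $X^*=X$). $\mathbf{CPM}(\mathbf{C})$ is Selinger's category whose objects are those of $\mathbf{C}$ and whose morphisms $A\to B$ are the completely positive morphisms $A\otimes A^*\to B\otimes B^*$ of $\mathbf{C}$ (those of the form $(1_B\otimes\eta_C^\dagger\otimes 1_{B^*})\circ(h\otimes h_* )$ up to symmetry, for some $h:A\to B\otimes C$); $Pure(f)=f\otimes f_*$. In $\mathbf{CPM}(\mathbf{FdHilb})$ these are the usual completely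 positive maps, $f\otimes f_*$ acts as $\rho\mapsto f\rho f^\dagger$ and partial trace is the usual one. Decohere $:=\delta\circ\delta^\dagger$ viewed as a morphism $X\to X$ in $\mathbf{CPM}(\mathbf{C})$ (equivalently $(1_X\otimes\eta_X^\dagger\otimes1_X)\circ(\delta\otimes\delta)$). An $X$-isometry is $\mathcal{V}: X\otimes A\to B$ such that $\mathcal{V}_\delta:=(1_X\otimes\mathcal{V})\circ(\delta\otimes1_A)$ satisfies $\mathcal{V}_\delta^\dagger\circ\mathcal{V}_\delta=1_{X\otimes A}$. A morphism $g: A\to X\otimes A$ is $X$-positive if $(\delta^\dagger\otimes 1_A)\circ(1_X\otimes g): X\otimes A\to X\otimes A$ equals $k\circ k^\dagger$ for some object $B$ and morphism $k: B\to X\otimes A$. A morphism $f: A\to X\otimes B$ is $X$-polar-decomposable if $f=\mathcal{V}_\delta\circ g$ for some $X$-positive $g:A\to X\otimes A$ and $X$-isometry $\mathcal{V}:X\otimes A\to B$. An abstract POVM on $A$ with outcomes in $X$ is the morphism $A\to X$ of $\mathbf{CPM}(\mathbf{C})$ obtained from an $X$-polar-decomposable $f: A\to X\otimes A$ with $f^\dagger\circ f=1_A$ by applying $Pure(f)=f\otimes f_*$, then Decohere on the $X$-part, then tracing out $A$ (i.e. $\mathrm{tr}^A[\mathrm{Decohere}\circ(f\otimes f_* )]$). *)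

(* A finite-dimensional Hilbert space is represented by a finite orthonormal basis
   index type; a linear map A -> B is its matrix, a function B -> A -> C. *)
From mathcomp Require Import all_boot all_order all_algebra.
Set Implicit Arguments. Unset Strict Implicit. Unset Printing Implicit Defensive.
Import Order.TTheory GRing.Theory Num.Theory.
Local Open Scope ring_scope.

Section FdHilb.
Variable C : numClosedFieldType.

(* morphisms A -> B of FdHilb: matrix entries f b a = <b| f |a> *)
Definition mor (A B : finType) := B -> A -> C.

Definition meq (A B : finType) (f g : mor A B) := forall b a, f b a = g b a.

Definition comp (A B D : finType) (g : mor B D) (f : mor A B) : mor A D :=
  fun d a => \sum_(b : B) g d b * f b a.

Definition dag (A B : finType) (f : mor A B) : mor B A := fun a b => (f b a)^*.

Definition idm (A : finType) : mor A A := fun a a' => (a == a')%:R.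
Arguments idm : clear implicits.

Definition tens (A B A' B' : finType) (f : mor A B) (g : mor A' B')
  : mor (A * A')%type (B * B')%type :=
  fun bb aa => f bb.1 aa.1 * g bb.2 aa.2.

Definition assoc (A B D : finType) : mor ((A * B) * D)%type (A * (B * D))%type :=
  fun y x => (y == (x.1.1, (x.1.2, x.2)))%:R.

Definition delta (n : nat) : mor 'I_n ('I_n * 'I_n)%type :=
  fun p i => ((p.1 == i) && (p.2 == i))%:R.
Definition eps (n : nat) : mor 'I_n unit := fun _ _ => 1.

Definition Vdelta (n : nat) (A B : finType) (V : mor ('I_n * A)%type B)
  : mor ('I_n * A)%type ('I_n * B)%type :=
  comp (tens (idm 'I_n) V) (comp (@assoc 'I_n 'I_n A) (tens (@delta n) (idm A))).

Definition X_isometry (n : nat) (A B : finType) (V : mor ('I_n * A)%type B) :=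
  meq (comp (dag (Vdelta V)) (Vdelta V)) (idm ('I_n * A)%type).

Definition X_positive (n : nat) (A : finType) (g : mor A ('I_n * A)%type) :=
  exists (p : nat) (k : mor 'I_p ('I_n * A)%type),
    meq (comp (tens (dag (@delta n)) (idm A))
              (comp (dag (@assoc 'I_n 'I_n A)) (tens (idm 'I_n) g)))
        (comp k (dag k)).

Definition X_polar_decomposable (n : nat) (A B : finType) (f : mor A ('I_n * B)%type) :=
  exists (g : mor A ('I_n * A)%type) (V : mor ('I_n * A)%type B),
    X_positive g /\ X_isometry V /\ meq f (comp (Vdelta V) g).

(* Action on operators rho : A -> A of CPM morphisms *)
Definition pure (A B : finType) (f : mor A B) (rho : mor A A) : mor B B :=
  comp f (comp rho (dag f)).

(* Decohere = delta o delta^dag as a CPM morphism X -> X, tensored (in CPM) with 1_A,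
   acting on an operator sigma on X (x) A *)
Definition decohere (n : nat) (A : finType) (sigma : mor ('I_n * A)%type ('I_n * A)%type)
  : mor ('I_n * A)%type ('I_n * A)%type :=
  fun xa ya => \sum_(y : 'I_n) \sum_(y' : 'I_n)
     comp (@delta n) (dag (@delta n)) (xa.1, ya.1) (y, y') * sigma (y, xa.2) (y', ya.2).

Definition ptrA (n : nat) (A : finType) (sigma : mor ('I_n * A)%type ('I_n * A)%type)
  : mor 'I_n 'I_n :=
  fun x x' => \sum_(a : A) sigma (x, a) (x', a).

Definition abstract_povm_map (n : nat) (A : finType) (f : mor A ('I_n * A)%type)
  (rho : mor A A) : mor 'I_n 'I_n :=
  ptrA (decohere (pure f rho)).

Definition is_abstract_POVM (n : nat) (A : finType) (Phi : mor A A -> mor 'I_n 'I_n) :=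
  exists f : mor A ('I_n * A)%type,
    X_polar_decomposable f /\ meq (comp (dag f) f) (idm A) /\
    forall rho, meq (Phi rho) (abstract_povm_map f rho).

Definition trace (A : finType) (M : mor A A) : C := \sum_(a : A) M a a.

Definition proj (n : nat) (i : 'I_n) : mor 'I_n 'I_n :=
  fun x x' => ((x == i) && (x' == i))%:R.

Definition kraus_form (n : nat) (A : finType) (Phi : mor A A -> mor 'I_n 'I_n) :=
  exists g : 'I_n -> mor A A,
    meq (fun a a' => \sum_(i < n) comp (dag (g i)) (g i) a a') (idm A) /\
    forall rho, meq (Phi rho)
      (fun x x' => \sum_(i < n) trace (comp (g i) (comp rho (dag (g i)))) * proj i x x').

Definition positive_op (A : finType) (F : mor A A) :=
  forall v : A -> C, 0 <= \sum_(a : A) \sum_(b : A) (v a)^* * F a b * v b.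

Definition povm_form (n : nat) (A : finType) (Phi : mor A A -> mor 'I_n 'I_n) :=
  exists F : 'I_n -> mor A A,
    (forall i, positive_op (F i)) /\
    meq (fun a a' => \sum_(i < n) F i a a') (idm A) /\
    forall rho, meq (Phi rho)
      (fun x x' => \sum_(i < n) trace (comp (F i) rho) * proj i x x').

End FdHilb.

(* A map [f : A -> X (x) A] splits into the Kraus operators [g_i = <i| f], and
   decohering then tracing out [A] turns [rho |-> f rho f^dag] into
   [rho |-> sum_i Tr (g_i rho g_i^dag) |i><i|]; the isometry condition on [f]
   is [sum_i g_i^dag g_i = 1].  Conversely, given a POVM [F_i], the Kraus
   operators [g_i = sqrt F_i] are positive, so the stacked map is already
   X-positive and decomposes with the trivial X-isometry [eps (x) 1_A].
   Square roots of positive operators come from the spectral theorem, after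
   polarization shows that positive operators are hermitian. *)

From Pilot Require Import Defs.
From mathcomp Require Import all_boot all_order all_algebra.
From mathcomp Require Import sesquilinear spectral ring.
From Stdlib Require Import FunctionalExtensionality.
(* Restores [comp] from Defs, shadowed by ssrfun's composition. *)
Import Pilot.Defs.
Set Implicit Arguments. Unset Strict Implicit. Unset Printing Implicit Defensive.
Import GRing.Theory Num.Theory.
Local Open Scope ring_scope.
Local Open Scope sesquilinear_scope.

Section PositiveSqrt.
Variable C : numClosedFieldType.
Variable m : nat.
Implicit Types M : 'M[C]_m.

Definition psdmx M := (M^t* = M) /\ forall u : 'rV[C]_m, 0 <= (u *m M *m u^t*) 0 0.

Lemma spectralmx_mulmxtC M : spectralmx M *m (spectralmx M)^t* = 1%:M.
Proof. by apply/unitarymxP; exact: spectral_unitarymx. Qed.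

Lemma psdmx_spectral M : psdmx M ->
  M = (spectralmx M)^t* *m diag_mx (spectral_diag M) *m spectralmx M.
Proof.
case=> herm _; have normal : M \is normalmx by apply/normalmxP; rewrite herm.
by rewrite {1}(orthomx_spectralP normal) invmx_unitary // spectral_unitarymx.
Qed.

Lemma spectral_diag_ge0 M : psdmx M -> forall j, 0 <= spectral_diag M 0 j.
Proof.
move=> psdM j; set P := spectralmx M; have [_ /(_ (row j P))] := psdM.
have PPt : P *m P^t* = 1%:M := spectralmx_mulmxtC M.
have -> : (row j P *m M *m (row j P)^t*) 0 0 = (P *m M *m P^t*) j j.
  rewrite !mxE; apply: eq_bigr => b _; rewrite !mxE; congr (_ * _).
  by apply: eq_bigr => a _; rewrite !mxE.
by rewrite {1}(psdmx_spectral psdM) !mulmxA PPt mul1mx -mulmxA PPt mulmx1 mxE eqxx mulr1n.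
Qed.

(* [R *m R^t*] is the positive square root of [M]: it is the spectral
   decomposition of [M] with each eigenvalue replaced by its square root. *)
Definition sqrt_factormx M : 'M[C]_m :=
  (spectralmx M)^t* *m diag_mx (\row_j sqrtC (sqrtC (spectral_diag M 0 j))).

Lemma sqrt_factormxP M : psdmx M ->
  let R := sqrt_factormx M in (R *m R^t*) *m (R *m R^t*) = M.
Proof.
move=> psdM R; set P := spectralmx M; set d := spectral_diag M.
have PPt : P *m P^t* = 1%:M := spectralmx_mulmxtC M.
have RRt : R *m R^t* = P^t* *m diag_mx (\row_j sqrtC (d 0 j)) *m P.
  rewrite /R /sqrt_factormx trmx_mul map_mxM trmxCK tr_diag_mx map_diag_mx.
  rewrite -!mulmxA [diag_mx _ *m (diag_mx _ *m _)]mulmxA mulmx_diag.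
  congr (_ *m (diag_mx _ *m _)); apply/rowP => j; rewrite !mxE /=.
  by rewrite geC0_conj ?sqrtC_ge0 ?(spectral_diag_ge0 psdM) // -expr2 sqrtCK.
rewrite RRt -!mulmxA [P *m _]mulmxA PPt mul1mx [diag_mx _ *m (_ *m _)]mulmxA mulmx_diag.
rewrite [RHS](psdmx_spectral psdM) -!mulmxA; congr (_ *m (diag_mx _ *m _)).
by apply/rowP => j; rewrite !mxE -expr2 sqrtCK.
Qed.
End PositiveSqrt.

Section FdHilbFacts.
Variable C : numClosedFieldType.

Lemma mor_ext (A B : finType) (f g : mor C A B) : meq f g -> f = g.
Proof.
move=> fg; apply: functional_extensionality => b.
by apply: functional_extensionality => a; exact: fg.
Qed.

Lemma sum_delta_l (T : finType) (a : T) (G : T -> C) :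
  \sum_z (z == a)%:R * G z = G a.
Proof.
rewrite (bigD1 a) //= big1 => [|z /negbTE ->]; by rewrite ?eqxx ?mul1r ?addr0 ?mul0r.
Qed.

Lemma sum_delta_r (T : finType) (a : T) (G : T -> C) :
  \sum_z G z * (z == a)%:R = G a.
Proof. by rewrite -[RHS](sum_delta_l a); apply: eq_bigr => z _; rewrite mulrC. Qed.

Definition qform (A : finType) (F : mor C A A) (v : A -> C) : C :=
  \sum_a \sum_b (v a)^* * F a b * v b.

Lemma qform_pair (A : finType) (F : mor C A A) (a b : A) (c : C) :
  qform F (fun z => (z == a)%:R + c * (z == b)%:R) =
  F a a + c * F a b + c^* * F b a + c^* * c * F b b.
Proof.
pose e (x y : A) := fun z w => (z == x)%:R * ((w == y)%:R * F z w).
have sum_e x y : \sum_z \sum_w e x y z w = F x y.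
  by under eq_bigr do rewrite -mulr_sumr sum_delta_l; rewrite sum_delta_l.
rewrite /qform -(sum_e a a) -(sum_e a b) -(sum_e b a) -(sum_e b b).
rewrite !mulr_sumr -!big_split /=; apply: eq_bigr => z _.
rewrite !mulr_sumr -!big_split /=; apply: eq_bigr => w _.
by rewrite /e rmorphD rmorphM /= !conjC_nat; ring.
Qed.

(* Polarization: the quadratic form is real along [e_a + c e_b] for [c = 0, 1, 'i]. *)
Lemma positive_op_hermitian (A : finType) (F : mor C A A) :
  positive_op F -> forall a b, F b a = (F a b)^*.
Proof.
move=> Fpos a b.
have real_pair x y c : (F x x + c * F x y + c^* * F y x + c^* * c * F y y)^* =
                        F x x + c * F x y + c^* * F y x + c^* * c * F y y.
  by rewrite -qform_pair; apply/conj_Creal/ger0_real; exact: Fpos.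
have Ra : (F a a)^* = F a a by have := real_pair a b 0; rewrite conjC0 !mul0r !addr0.
have Rb : (F b b)^* = F b b by have := real_pair b a 0; rewrite conjC0 !mul0r !addr0.
have R1 := real_pair a b 1; have Ri := real_pair a b 'i.
rewrite !rmorphD !rmorphM /= ?conjCK ?conjCi ?rmorph1 Ra Rb in R1 Ri.
set x := F a b in R1 Ri *; set y := F b a in R1 Ri *.
have sum_real : x^* + y^* - x - y = 0.
  by move/eqP: R1; rewrite -subr_eq0 => /eqP <-; ring.
have diff_real : 'i * (y^* - x^* + y - x) = 0.
  by move/eqP: Ri; rewrite -subr_eq0 => /eqP <-; ring.
move/eqP: diff_real; rewrite mulf_eq0 (negbTE (neq0Ci C)) /= => /eqP diff_real.
have : (2%:R : C) * (y - x^*) = 0 by rewrite -[RHS](subr0 0) -{1}diff_real -sum_real; ring.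
by move/eqP; rewrite mulf_eq0 pnatr_eq0 /= subr_eq0 => /eqP.
Qed.

Definition mx_of_mor (A : finType) (F : mor C A A) : 'M[C]_#|A| :=
  \matrix_(i, j) F (enum_val i) (enum_val j).

Definition mor_of_mx (A : finType) (K : 'M[C]_#|A|) : mor C A A :=
  fun a b => K (enum_rank a) (enum_rank b).

Lemma sum_enum_val (T : finType) (G : T -> C) :
  \sum_(x : T) G x = \sum_(i < #|T|) G (enum_val i).
Proof. by rewrite (reindex (@enum_val T T)) //; apply: onW_bij; exact: enum_val_bij. Qed.

Lemma mor_of_mxM (A : finType) (K L : 'M[C]_#|A|) :
  comp (mor_of_mx K) (mor_of_mx L) = mor_of_mx (K *m L) :> mor C A A.
Proof.
apply: mor_ext => a b; rewrite /comp /mor_of_mx mxE sum_enum_val.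
by apply: eq_bigr => i _; rewrite enum_valK.
Qed.

Lemma dag_mor_of_mx (A : finType) (K : 'M[C]_#|A|) :
  dag (mor_of_mx K) = mor_of_mx (K^t*) :> mor C A A.
Proof. by apply: mor_ext => a b; rewrite /dag /mor_of_mx !mxE. Qed.

Lemma mx_of_morK (A : finType) : cancel (@mx_of_mor A) (@mor_of_mx A).
Proof. by move=> F; apply: mor_ext => a b; rewrite /mor_of_mx mxE !enum_rankK. Qed.

Lemma psdmx_of_positive_op (A : finType) (F : mor C A A) :
  positive_op F -> psdmx (mx_of_mor F).
Proof.
move=> Fpos; split.
  by apply/matrixP => i j; rewrite !mxE /= -(positive_op_hermitian Fpos).
move=> u; have := Fpos (fun a => (u 0 (enum_rank a))^*).
congr (_ <= _); rewrite mxE exchange_big sum_enum_val; apply: eq_bigr => j _.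
rewrite !mxE big_distrl sum_enum_val; apply: eq_bigr => i _.
by rewrite !mxE /= conjCK !enum_valK.
Qed.

Definition sqrt_factor (A : finType) (F : mor C A A) : mor C A A :=
  mor_of_mx (sqrt_factormx (mx_of_mor F)).

Definition psqrt (A : finType) (F : mor C A A) : mor C A A :=
  comp (sqrt_factor F) (dag (sqrt_factor F)).

Lemma dag_gram (A B : finType) (k : mor C A B) : dag (comp k (dag k)) = comp k (dag k).
Proof.
apply: mor_ext => a b; rewrite /dag /comp rmorph_sum; apply: eq_bigr => c _.
by rewrite rmorphM /= conjCK mulrC.
Qed.

Lemma gram_psqrt (A : finType) (F : mor C A A) :
  positive_op F -> comp (dag (psqrt F)) (psqrt F) = F.
Proof.
move=> Fpos; rewrite dag_gram /psqrt /sqrt_factor dag_mor_of_mx !mor_of_mxM.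
by rewrite (sqrt_factormxP (psdmx_of_positive_op Fpos)) mx_of_morK.
Qed.

Lemma positive_op_gram (A B : finType) (g : mor C A B) : positive_op (comp (dag g) g).
Proof.
move=> v; change (0 <= qform (comp (dag g) g) v); have -> : qform (comp (dag g) g) v =
    \sum_c (\sum_b g c b * v b)^* * (\sum_b g c b * v b).
  rewrite /qform /comp /dag.
  under eq_bigr do (under eq_bigr do rewrite mulr_sumr mulr_suml).
  under [RHS]eq_bigr do rewrite rmorph_sum big_distrl.
  under [RHS]eq_bigr do (under eq_bigr do rewrite big_distrr).
  rewrite [RHS](exchange_big_dep xpredT) //=.
  under [RHS]eq_bigr do rewrite exchange_big.
  apply: eq_bigr => a _; apply: eq_bigr => b _; apply: eq_bigr => c _ /=.
  by rewrite rmorphM /=; ring.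
by apply: sumr_ge0 => c _; rewrite mulrC; exact: mul_conjC_ge0.
Qed.

Lemma trace_conj (A B : finType) (g : mor C A B) (rho : mor C A A) :
  trace (comp g (comp rho (dag g))) = trace (comp (comp (dag g) g) rho).
Proof.
rewrite /trace /comp /dag.
under eq_bigr do (under eq_bigr do rewrite big_distrr).
rewrite exchange_big /=; under eq_bigr do rewrite exchange_big /=.
rewrite exchange_big /=; apply: eq_bigr => a _; apply: eq_bigr => b _.
rewrite big_distrl; apply: eq_bigr => c _ /=; ring.
Qed.

Lemma comp_idm_l (A B : finType) (f : mor C A B) : comp (@idm C B) f = f.
Proof.
apply: mor_ext => b a; rewrite /comp /idm.
by under eq_bigr do rewrite eq_sym; rewrite sum_delta_l.
Qed.

Lemma dag_idm (A : finType) : dag (@idm C A) = @idm C A.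
Proof. by apply: mor_ext => b a; rewrite /dag /idm conjC_nat eq_sym. Qed.

Lemma delta_pairE n (p : 'I_n * 'I_n) (i : 'I_n) : @delta C n p i = (p == (i, i))%:R.
Proof. by case: p => p1 p2; rewrite /delta xpair_eqE. Qed.

Section Blocks.
Variables (n : nat) (A B : finType).

Definition kraus_op (f : mor C A ('I_n * B)%type) (i : 'I_n) : mor C A B :=
  fun b a => f (i, b) a.

Definition stack (g : 'I_n -> mor C A B) : mor C A ('I_n * B)%type :=
  fun p a => g p.1 p.2 a.

Definition blockdiag (g : 'I_n -> mor C A B) : mor C ('I_n * A)%type ('I_n * B)%type :=
  fun q p => (q.1 == p.1)%:R * g q.1 q.2 p.2.

Lemma kraus_op_stack (g : 'I_n -> mor C A B) : kraus_op (stack g) = g.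
Proof. by []. Qed.

Lemma gram_kraus_ops (f : mor C A ('I_n * B)%type) :
  comp (dag f) f = fun a a' => \sum_i comp (dag (kraus_op f i)) (kraus_op f i) a a'.
Proof.
apply: mor_ext => a a'; rewrite /comp /dag pair_bigA.
by apply: eq_bigr => -[i b].
Qed.
End Blocks.

Lemma dag_blockdiag n (A B : finType) (g : 'I_n -> mor C A B) :
  dag (blockdiag g) = blockdiag (fun i => dag (g i)).
Proof.
apply: mor_ext => -[i b] [j a]; rewrite /dag /blockdiag /= rmorphM /= conjC_nat.
by case: eqVneq => [->|]; rewrite ?eqxx ?mul0r // eq_sym => /negbTE ->; rewrite mul0r.
Qed.

Lemma comp_blockdiag n (A B D : finType) (g : 'I_n -> mor C B D) (h : 'I_n -> mor C A B) :
  comp (blockdiag g) (blockdiag h) = blockdiag (fun i => comp (g i) (h i)).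
Proof.
apply: mor_ext => -[i d] [k a]; rewrite /comp /blockdiag.
rewrite -(pair_bigA _ (fun j b => (i == j)%:R * g i d b * ((j == k)%:R * h j b a))) /=.
rewrite (bigD1 i) //= [X in _ + X]big1 => [|j /negbTE ne]; last first.
  by apply: big1 => b _; rewrite eq_sym ne !mul0r.
by rewrite eqxx addr0 mulr_sumr; apply: eq_bigr => b _; rewrite mul1r mulrCA.
Qed.

Lemma X_positive_formE n (A : finType) (g : mor C A ('I_n * A)%type) :
  comp (tens (dag (@delta C n)) (@idm C A))
       (comp (dag (@assoc C 'I_n 'I_n A)) (tens (@idm C 'I_n) g)) = blockdiag (kraus_op g).
Proof.
apply: mor_ext => -[i a] q; rewrite {1}/comp.
transitivity (\sum_(r : 'I_n * 'I_n * A) (r == (i, i, a))%:R *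
    comp (dag (@assoc C 'I_n 'I_n A)) (tens (@idm C 'I_n) g) r q).
  apply: eq_bigr => -[[r1 r2] r3] _; congr (_ * _).
  rewrite /tens /idm /dag delta_pairE conjC_nat /= -natrM mulnb.
  by rewrite [in RHS]xpair_eqE (eq_sym a).
rewrite sum_delta_l /comp.
transitivity (\sum_(s : 'I_n * ('I_n * A)) (s == (i, (i, a)))%:R * tens (@idm C 'I_n) g s q).
  by apply: eq_bigr => s _; rewrite /dag /assoc conjC_nat.
by rewrite sum_delta_l /tens /idm /blockdiag /kraus_op /=; case: q.
Qed.

Lemma X_positive_of_blockdiag_gram n (A T : finType) (g : mor C A ('I_n * A)%type)
    (k : mor C T ('I_n * A)%type) :
  blockdiag (kraus_op g) = comp k (dag k) -> X_positive g.
Proof.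
move=> gk; exists #|T|, (fun p i => k p (enum_val i)) => p q.
by rewrite X_positive_formE gk /comp; exact: sum_enum_val.
Qed.

Lemma X_positive_stack_gram n (A : finType) (k : 'I_n -> mor C A A) :
  X_positive (stack (fun i => comp (k i) (dag (k i)))).
Proof.
apply: (@X_positive_of_blockdiag_gram _ _ _ _ (blockdiag k)).
by rewrite dag_blockdiag comp_blockdiag.
Qed.

Lemma VdeltaE n (A B : finType) (V : mor C ('I_n * A)%type B) p q :
  Vdelta V p q = (p.1 == q.1)%:R * V p.2 q.
Proof.
have copy_q r : comp (@assoc C 'I_n 'I_n A) (tens (@delta C n) (@idm C A)) r q
    = (r == (q.1, q))%:R.
  rewrite /comp; transitivity (\sum_(s : 'I_n * 'I_n * A)
      @assoc C 'I_n 'I_n A r s * (s == (q.1, q.1, q.2))%:R).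
    apply: eq_bigr => -[[s1 s2] s3] _; congr (_ * _).
    by rewrite /tens /idm delta_pairE /= -natrM mulnb [in RHS]xpair_eqE.
  by rewrite sum_delta_r /assoc; case: q.
by rewrite /Vdelta {1}/comp; under eq_bigr do rewrite copy_q; rewrite sum_delta_r.
Qed.

(* [eps (x) 1_A]; by the counit law its [Vdelta] is the identity. *)
Definition discard (n : nat) (A : finType) : mor C ('I_n * A)%type A :=
  fun a p => (a == p.2)%:R.

Lemma Vdelta_discard (n : nat) (A : finType) :
  Vdelta (@discard n A) = @idm C ('I_n * A)%type.
Proof.
apply: mor_ext => -[i a] [j b]; rewrite VdeltaE /discard /idm /=.
by rewrite -natrM mulnb xpair_eqE.
Qed.

Lemma X_polar_decomposable_stack_gram n (A : finType) (k : 'I_n -> mor C A A) :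
  X_polar_decomposable (stack (fun i => comp (k i) (dag (k i)))).
Proof.
exists (stack (fun i => comp (k i) (dag (k i)))), (@discard n A); split; last split.
- exact: X_positive_stack_gram.
- by rewrite /X_isometry Vdelta_discard dag_idm comp_idm_l.
- by rewrite Vdelta_discard comp_idm_l.
Qed.

Lemma decohereE n (A : finType) (sigma : mor C ('I_n * A)%type ('I_n * A)%type) p q :
  decohere sigma p q = (p.1 == q.1)%:R * sigma (p.1, p.2) (p.1, q.2).
Proof.
rewrite /decohere.
transitivity (\sum_(y : 'I_n) \sum_(y' : 'I_n)
   (y == p.1)%:R * ((y' == p.1)%:R * ((p.1 == q.1)%:R * sigma (y, p.2) (y', q.2)))).
  apply: eq_bigr => y _; apply: eq_bigr => y' _.
  rewrite /comp /dag (bigD1 p.1) //= big1 => [|i ne].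
    rewrite !delta_pairE conjC_nat !xpair_eqE /= eqxx addr0 /=.
    rewrite -!natrM !mulnb [(q.1 == p.1)]eq_sym.
    by case: (y == p.1); case: (y' == p.1); case: (p.1 == q.1); rewrite ?mul0r ?mul1r.
  by rewrite !delta_pairE !xpair_eqE /= (eq_sym p.1) (negbTE ne) mul0r.
by under eq_bigr do rewrite -mulr_sumr sum_delta_l; rewrite sum_delta_l.
Qed.

Lemma sum_proj n (T : 'I_n -> C) x x' :
  \sum_(i < n) T i * proj C i x x' = (x == x')%:R * T x.
Proof.
rewrite (bigD1 x) //= big1 => [|i ne]; last by rewrite /proj (eq_sym x) (negbTE ne) mulr0.
by rewrite /proj eqxx /= addr0 mulrC eq_sym.
Qed.

Lemma abstract_povm_mapE n (A : finType) (f : mor C A ('I_n * A)%type) rho :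
  abstract_povm_map f rho = fun x x' =>
    \sum_(i < n) trace (comp (kraus_op f i) (comp rho (dag (kraus_op f i)))) * proj C i x x'.
Proof.
apply: mor_ext => x x'; rewrite sum_proj /abstract_povm_map /ptrA.
by under eq_bigr do rewrite decohereE /=; rewrite -mulr_sumr.
Qed.
End FdHilbFacts.

Section Characterizations.
Variables (C : numClosedFieldType) (n : nat) (A : finType).
Variable Phi : mor C A A -> mor C 'I_n 'I_n.

Lemma kraus_form_of_abstract_POVM : is_abstract_POVM Phi -> kraus_form Phi.
Proof.
move=> [f [_ [f_iso PhiE]]]; exists (kraus_op f); split.
  by move=> a a'; rewrite -f_iso gram_kraus_ops.
by move=> rho x x'; rewrite PhiE abstract_povm_mapE.
Qed.

Lemma povm_form_of_kraus : kraus_form Phi -> povm_form Phi.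
Proof.
move=> [g [g_sum PhiE]]; exists (fun i => comp (dag (g i)) (g i)); split; last split.
- by move=> i; exact: positive_op_gram.
- exact: g_sum.
- by move=> rho x x'; rewrite PhiE; apply: eq_bigr => i _; rewrite trace_conj.
Qed.

Lemma kraus_form_of_povm : povm_form Phi -> kraus_form Phi.
Proof.
move=> [F [F_pos [F_sum PhiE]]]; exists (fun i => psqrt (F i)); split.
  by move=> a a'; rewrite -F_sum; apply: eq_bigr => i _; rewrite gram_psqrt.
by move=> rho x x'; rewrite PhiE; apply: eq_bigr => i _; rewrite trace_conj gram_psqrt.
Qed.

Lemma abstract_POVM_of_povm : povm_form Phi -> is_abstract_POVM Phi.
Proof.
move=> [F [F_pos [F_sum PhiE]]]; exists (stack (fun i => psqrt (F i))); split; last split.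
- exact: (X_polar_decomposable_stack_gram (fun i => sqrt_factor (F i))).
- move=> a a'; rewrite gram_kraus_ops kraus_op_stack -F_sum.
  by apply: eq_bigr => i _; rewrite gram_psqrt.
- move=> rho x x'; rewrite PhiE abstract_povm_mapE kraus_op_stack.
  by apply: eq_bigr => i _; rewrite trace_conj gram_psqrt.
Qed.
End Characterizations.

Theorem mainTheorem2 (C : numClosedFieldType) (n : nat) (A : finType)
    (Phi : mor C A A -> mor C 'I_n 'I_n) :
  (is_abstract_POVM Phi <-> kraus_form Phi) /\ (kraus_form Phi <-> povm_form Phi).
Proof.
split; split.
- exact: kraus_form_of_abstract_POVM.
- by move=> /povm_form_of_kraus; exact: abstract_POVM_of_povm.
- exact: povm_form_of_kraus.
- exact: kraus_form_of_povm.
Qed.
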